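(* Let $\lambda>0$, $\mathbf{A}\in\mathbb{R}^{m\times n}$, let $f:\mathbb{R}^m\to\mathbb{R}\cup\{+\infty\}$ be proper, closed and convex, and let $h:\mathbb{R}\to\mathbb{R}\cup\{+\infty\}$ be proper, closed and convex with $0\in\mathrm{dom}(h)$, $h(0)=0$, and $0$ an accumulation point of $\mathrm{dom}(h)$. Let $\nu=(\mathcal{S}_0,\mathcal{S}_1,\mathcal{S}_\bullet)$ be a partition of $\{1,\dots,n\}$, let $\nu'=(\mathcal{S}_0',\mathcal{S}_1',\mathcal{S}_\bullet')$ be any partition of $\{1,\dots,n\}$ with $\mathcal{S}_0\subseteq\mathcal{S}_0'$ and $\mathcal{S}_1\subseteq\mathcal{S}_1'$, let $i\in\mathcal{S}_\bullet'$, let $\mathbf{u}\in\mathbb{R}^m$ and $\bar p\in\mathbb{R}$. Then $$D^{\nu_{0,i}}(\mathbf{u})>\bar p\implies D^{\nu'_{0,i}}(\mathbf{u})>\bar p,\qquad D^{\nu_{1,i}}(\mathbf{u})>\bar p\implies D^{\nu'_{1,i}}(\mathbf{u})>\bar p.$$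
   Context: $\|\mathbf{x}\|_0$ is the number of nonzero entries of $\mathbf{x}$; $\eta(\text{condition})=0$ if the condition holds and $+\infty$ otherwise; $\omega^*$ denotes the convex conjugate of $\omega$. An accumulation point $0$ of a set $\mathcal{C}\subseteq\mathbb{R}$: every neighborhood of $0$ contains a point of $\mathcal{C}$ other than $0$. For a partition $\nu=(\mathcal{S}_0,\mathcal{S}_1,\mathcal{S}_\bullet)$ of $\{1,\dots,n\}$: $\mathcal{X}^\nu=\{\mathbf{x}\in\mathbb{R}^n: x_j=0\ \forall j\in\mathcal{S}_0,\ x_j\neq0\ \forall j\in\mathcal{S}_1\}$; $g^\nu(\mathbf{x})=\lambda\|\mathbf{x}\|_0+\sum_{j=1}^n h(x_j)+\eta(\mathbf{x}\in\mathcal{X}^\nu)$; $D^\nu(\mathbf{u})=-f^*(-\mathbf{u})-(g^\nu)^*(\mathbf{A}^\top\mathbf{u})$. For $i\in\mathcal{S}_\bullet$, the two direct successors of $\nu$ are $\nu_{0,i}=(\mathcal{S}_0\cup\{i\},\mathcal{S}_1,\mathcal{S}_\bullet\setminus\{i\})$ and $\nu_{1,i}=(\mathcal{S}_0,\mathcal{S}_1\cup\{i\},\mathcal{S}_\bullet\setminus\{i\})$ (note $\mathcal{S}_\bullet'\subseteq\mathcal{S}_\bullet$, so $i\in\mathcal{S}_\bullet$); $\nu'_{0,i},\nu'_{1,i}$ are defined analogously from $\nu'$. *)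

From HB Require Import structures.
From mathcomp Require Import all_boot all_order all_algebra.
From mathcomp Require Import all_classical all_reals all_analysis.
Set Implicit Arguments. Unset Strict Implicit. Unset Printing Implicit Defensive.
Import Order.TTheory GRing.Theory Num.Theory.
Import numFieldNormedType.Exports.
Local Open Scope classical_set_scope.
Local Open Scope ring_scope.

Section Defs.
Variable R : realType.

Definition dotv (k : nat) (x y : 'cV[R]_k) : R := \sum_(j < k) x j ord0 * y j ord0.

Definition in_dom (T : Type) (F : T -> \bar R) (x : T) : Prop := (F x < +oo)%E.

Definition proper_fun (T : Type) (F : T -> \bar R) : Prop :=
  (exists x, F x < +oo)%E /\ (forall x, -oo < F x)%E.

Definition convex_efun (V : lmodType R) (F : V -> \bar R) : Prop :=
  forall (x y : V) (a b t : R), (F x <= a%:E)%E -> (F y <= b%:E)%E ->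
    0 <= t -> t <= 1 ->
    (F ((t *: x + (1 - t) *: y)%R) <= (t * a + (1 - t) * b)%:E)%E.

Definition closed_efun (V : topologicalType) (F : V -> \bar R) : Prop :=
  closed [set p : V * R | (F p.1 <= p.2%:E)%E].

Definition conj_fun (k : nat) (F : 'cV[R]_k -> \bar R) (y : 'cV[R]_k) : \bar R :=
  ereal_sup [set ((dotv x y)%:E - F x)%E | x in [set: 'cV[R]_k]].

Definition l0norm (n : nat) (x : 'cV[R]_n) : nat := #|[set j : 'I_n | x j ord0 != 0]|.

(* X^nu for nu = (S0, S1, Sbullet); only S0 and S1 matter *)
Definition Xnu (n : nat) (S0 S1 : {set 'I_n}) : set 'cV[R]_n :=
  [set x | (forall j, j \in S0 -> x j ord0 = 0) /\ (forall j, j \in S1 -> x j ord0 != 0)].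

Definition eta_ind (T : Type) (X : set T) (x : T) : \bar R :=
  if `[< X x >] then 0%E else +oo%E.

Definition gnu (n : nat) (lam : R) (h : R -> \bar R) (S0 S1 : {set 'I_n})
  (x : 'cV[R]_n) : \bar R :=
  ((lam * (l0norm x)%:R)%:E + (\sum_(j < n) h (x j ord0)) + eta_ind (Xnu S0 S1) x)%E.

Definition Dnu (m n : nat) (lam : R) (A : 'M[R]_(m, n)) (f : 'cV[R]_m -> \bar R)
  (h : R -> \bar R) (S0 S1 : {set 'I_n}) (u : 'cV[R]_m) : \bar R :=
  (- conj_fun f (- u) - conj_fun (gnu lam h S0 S1) (A^T *m u))%E.

End Defs.

Local Close Scope classical_set_scope.
(* (S0, S1, Sb) is a partition of {1..n} (blocks may be empty) *)
Definition partition3 (n : nat) (S0 S1 Sb : {set 'I_n}) : Prop :=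
  [/\ [disjoint S0 & S1], [disjoint S0 & Sb], [disjoint S1 & Sb]
    & S0 :|: S1 :|: Sb = [set: 'I_n]].

(* Fixing more coordinates to zero or to nonzero shrinks the feasible set
   X^nu, so g^nu grows pointwise, its conjugate shrinks, and D^nu grows.
   Since S0 ⊆ S0' and S1 ⊆ S1', each successor of nu' constrains at least as
   much as the corresponding successor of nu. *)
From HB Require Import structures.
From mathcomp Require Import all_boot all_order all_algebra.
From mathcomp Require Import all_classical all_reals all_analysis.
Import Order.TTheory GRing.Theory Num.Theory.
Import numFieldNormedType.Exports.
Local Open Scope classical_set_scope.
Local Open Scope ring_scope.

Section ConstraintMonotonicity.
Variable R : realType.

Lemma Xnu_subset (n : nat) (S0 S1 T0 T1 : {set 'I_n}) :
  S0 \subset T0 -> S1 \subset T1 -> @Xnu R n T0 T1 `<=` Xnu S0 S1.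
Proof.
move=> /fintype.subsetP sS0 /fintype.subsetP sS1 x [x0 x1].
by split=> j; [move/sS0/x0 | move/sS1/x1].
Qed.

Lemma eta_ind_le (T : Type) (X Y : set T) (x : T) :
  X `<=` Y -> (eta_ind R Y x <= eta_ind R X x)%E.
Proof.
rewrite /eta_ind => XY.
case: (asboolP (Y x)) => [_|nYx]; case: (asboolP (X x)) => // Xx.
by case: (nYx (XY x Xx)).
Qed.

Lemma conj_fun_le (k : nat) (F G : 'cV[R]_k -> \bar R) (y : 'cV[R]_k) :
  (forall x, (F x <= G x)%E) -> (conj_fun G y <= conj_fun F y)%E.
Proof.
move=> FG; apply: ge_ereal_sup => _ [x _ <-].
apply: (@le_trans _ _ ((dotv x y)%:E - F x)%E).
  by apply: leeD => //; rewrite leeN2.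
by apply: ereal_sup_ubound; exists x.
Qed.

Variables (m n : nat) (lam : R) (A : 'M[R]_(m, n)).
Variables (f : 'cV[R]_m -> \bar R) (h : R -> \bar R).

Lemma gnu_le (S0 S1 T0 T1 : {set 'I_n}) (x : 'cV[R]_n) :
  S0 \subset T0 -> S1 \subset T1 ->
  (gnu lam h S0 S1 x <= gnu lam h T0 T1 x)%E.
Proof.
by move=> sS0 sS1; apply: leeD => //; apply: eta_ind_le; exact: Xnu_subset.
Qed.

Lemma Dnu_le (S0 S1 T0 T1 : {set 'I_n}) (u : 'cV[R]_m) :
  S0 \subset T0 -> S1 \subset T1 ->
  (Dnu lam A f h S0 S1 u <= Dnu lam A f h T0 T1 u)%E.
Proof.
move=> sS0 sS1; apply: leeD => //; rewrite leeN2.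
by apply: conj_fun_le => x; exact: gnu_le.
Qed.

End ConstraintMonotonicity.

Theorem proposition3p4 (R : realType) (m n : nat) (lam : R) (A : 'M[R]_(m, n))
  (f : 'cV[R]_m -> \bar R) (h : R -> \bar R)
  (S0 S1 Sb S0' S1' Sb' : {set 'I_n}) (i : 'I_n) (u : 'cV[R]_m) (pbar : R) :
  0 < lam ->
  proper_fun f -> closed_efun f -> convex_efun f ->
  proper_fun h -> closed_efun h -> convex_efun h ->
  in_dom h 0 -> h 0 = 0%E -> limit_point [set x | in_dom h x] 0 ->
  partition3 S0 S1 Sb -> partition3 S0' S1' Sb' ->
  S0 \subset S0' -> S1 \subset S1' -> i \in Sb' ->
  ((pbar%:E < Dnu lam A f h (S0 :|: [set i]) S1 u)%E ->
     (pbar%:E < Dnu lam A f h (S0' :|: [set i]) S1' u)%E)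
  /\
  ((pbar%:E < Dnu lam A f h S0 (S1 :|: [set i]) u)%E ->
     (pbar%:E < Dnu lam A f h S0' (S1' :|: [set i]) u)%E).
Proof.
move=> _ _ _ _ _ _ _ _ _ _ _ _ sS0 sS1 _.
split=> /lt_le_trans; apply; apply: Dnu_le => //; exact: finset.setSU.
Qed.
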